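(* Let $k\ge2$, $\beta>0$, $J,B\in\mathbb{R}$, $\theta=\tanh(\beta J)$, $f_\theta(h)=\operatorname{arctanh}(\theta\tanh h)$, and let $(h,h')\in\mathbb{R}^2$ satisfy $$h=k f_\theta(h'+\beta B),\qquad h'=k f_\theta(h+\beta B).$$ Consider the periodic boundary condition $h_x=h$ if $d(x,x^0)$ is even and $h_x=h'$ if $d(x,x^0)$ is odd. Let $F_n=-\frac{1}{\beta|V_n|}\ln Z_n(\{h_x\})$ and $$d(t)=\frac{1}{2\beta}\ln\big(4\cosh[t+\beta(B+J)]\cosh[t+\beta(B-J)]\big).$$ Then $$\lim_{m\to\infty}F_{2m}=-\frac{1}{k+1}\big(k\,d(h)+d(h')\big),\qquad \lim_{m\to\infty}F_{2m+1}=-\frac{1}{k+1}\big(d(h)+k\,d(h')\big).$$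
   Context: $\Gamma^k=(V,L)$ is the Cayley tree in which every vertex has $k+1$ neighbours; $x^0\in V$ is a fixed root, $d(\cdot,\cdot)$ the graph distance, $V_n=\{x:d(x,x^0)\le n\}$, $W_n=\{x:d(x,x^0)=n\}$. For a boundary condition $\{h_x\in\mathbb{R}\}_{x\in V}$, $$Z_n(\{h_x\})=\sum_{\sigma\in\{-1,1\}^{V_n}}\exp\Big\{\beta J\sum_{\langle x,y\rangle\subset V_n}\sigma(x)\sigma(y)+\beta B\sum_{x\in V_n}\sigma(x)+\sum_{x\in W_n}h_x\sigma(x)\Big\},$$ the first sum running over nearest-neighbour pairs with both endpoints in $V_n$. *)

From Stdlib Require Import Reals.
From HB Require Import structures.
From mathcomp Require Import all_boot all_order all_algebra.
From mathcomp Require Import Rstruct.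

Unset Printing Implicit Defensive.
Import GRing.Theory Num.Theory.
Local Open Scope ring_scope.

Definition arctanh (y : R) : R := 2^-1 * ln ((1 + y) / (1 - y)).

Definition f_theta (theta h : R) : R := arctanh (theta * tanh h).

(* Gamma^k is realised as the Cayley graph of the free product of k+1 copies
   of Z/2Z with generators a_0,...,a_k: vertices are reduced words
   (no two consecutive equal letters) over 'I_(k+1); x and y are neighbours
   iff y = x a_i or x = y a_i. *)

Definition reduced (k : nat) (s : seq 'I_k.+1) : bool :=
  if s is a :: t then path (fun x y => x != y) a t else true.

Definition cayley_child (k : nat) (x y : seq 'I_k.+1) : bool :=
  (size y == (size x).+1) && (take (size x) y == x).

Definition cayley_adj (k : nat) (x y : seq 'I_k.+1) : bool :=
  cayley_child k x y || cayley_child k y x.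

Definition root_vertex (k : nat) : seq 'I_k.+1 := [::].

Definition dist_root (k : nat) (x : seq 'I_k.+1) : nat := size x.

Definition ball (k n : nat) : seq (seq 'I_k.+1) :=
  [seq s <- flatten [seq [seq val t | t <- enum {: m.-tuple 'I_k.+1}]
                    | m <- iota 0 n.+1] | reduced k s].

Definition Vn (k n : nat) : finType := seq_sub (ball k n).

Definition spin (b : bool) : R := if b then 1 else -1.

Definition Zn (k : nat) (beta J B : R) (hb : seq 'I_k.+1 -> R) (n : nat) : R :=
  \sum_(sigma : {ffun Vn k n -> bool})
    exp (beta * J * (2^-1 * \sum_(x : Vn k n) \sum_(y : Vn k n
                             | cayley_adj k (val x) (val y))
                             spin (sigma x) * spin (sigma y))
         + beta * B * (\sum_(x : Vn k n) spin (sigma x))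
         + \sum_(x : Vn k n | dist_root k (val x) == n)
              hb (val x) * spin (sigma x)).

Definition periodic_bc (k : nat) (h h' : R) (x : seq 'I_k.+1) : R :=
  if odd (dist_root k x) then h' else h.

Definition free_energy (k : nat) (beta J B : R) (hb : seq 'I_k.+1 -> R)
  (n : nat) : R :=
  - (beta * #|Vn k n|%:R)^-1 * ln (Zn k beta J B hb n).

Definition dfun (beta J B t : R) : R :=
  (2 * beta)^-1 * ln (4 * cosh (t + beta * (B + J)) * cosh (t + beta * (B - J))).

From Stdlib Require Import Reals Lra Lia.
From HB Require Import structures.
From mathcomp Require Import all_boot all_order all_algebra.
From mathcomp Require Import Rstruct zify.

(* Every edge of V_n joins a vertex of depth >= 1 to its parent, so the spins
   of the outermost level interact only with their parents.  Summing them out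
   uses
     sum_(s = +-1) exp (s (beta J sigma + t)) = exp (L(t) + sigma f_theta(t)),
     L(t) = 1/2 ln (4 cosh (t + beta J) cosh (t - beta J)) = beta d(t - beta B):
   removing the level W_(j+1) contributes exp (|W_(j+1)| L(beta B + h_(j+1)))
   and turns the field on W_j into k f_theta(beta B + h_(j+1)) ((k + 1) at the
   root).  By the fixed-point equations this is the periodic field again, so
   ln Z_n = sum_(1 <= j <= n) |W_j| L(beta B + h_j) + O(1), |W_j| = (k+1) k^(j-1),
   and |V_n| = 1 + sum_j |W_j|.  Along each parity of n both are affine in the
   same diverging geometric sum, and F_n converges to the ratio of the slopes. *)

Local Open Scope R_scope.

Lemma cosh_exp x : cosh x = (exp x + / exp x) / 2.
Proof. by rewrite /cosh exp_Ropp. Qed.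

Lemma sinh_exp x : sinh x = (exp x - / exp x) / 2.
Proof. by rewrite /sinh exp_Ropp. Qed.

Lemma cosh_pos x : 0 < cosh x.
Proof. rewrite /cosh; have := exp_pos x; have := exp_pos (- x); lra. Qed.

Lemma one_add_tanh_mul u t :
  1 + tanh u * tanh t = cosh (t + u) / (cosh t * cosh u).
Proof.
rewrite /tanh !cosh_exp !sinh_exp exp_plus.
have hX := exp_pos t; have hY := exp_pos u.
set X := exp t; set Y := exp u.
have h1 : X * X + 1 <> 0 by nra.
have h2 : Y * Y + 1 <> 0 by nra.
field; repeat split; by [apply: Rgt_not_eq | auto].
Qed.

Lemma one_sub_tanh_mul u t :
  1 - tanh u * tanh t = cosh (t - u) / (cosh t * cosh u).
Proof.
rewrite /tanh !cosh_exp !sinh_exp /Rminus exp_plus exp_Ropp.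
have hX := exp_pos t; have hY := exp_pos u.
set X := exp t; set Y := exp u.
have h1 : X * X + 1 <> 0 by nra.
have h2 : Y * Y + 1 <> 0 by nra.
field; repeat split; by [apply: Rgt_not_eq | auto].
Qed.

Lemma ln_tanh_ratio u t :
  ln ((1 + tanh u * tanh t) * / (1 - tanh u * tanh t))
  = ln (cosh (t + u)) - ln (cosh (t - u)).
Proof.
have cp := cosh_pos (t + u); have cm := cosh_pos (t - u).
have -> : (1 + tanh u * tanh t) * / (1 - tanh u * tanh t) = cosh (t + u) * / cosh (t - u).
  rewrite one_add_tanh_mul one_sub_tanh_mul.
  have := cosh_pos t; have := cosh_pos u.
  by move=> *; field; repeat split; lra.
by rewrite ln_mult ?ln_Rinv //; apply: Rinv_0_lt_compat.
Qed.

Lemma ln_4cosh_mul u t :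
  ln (4 * cosh (t + u) * cosh (t - u))
  = 2 * ln 2 + ln (cosh (t + u)) + ln (cosh (t - u)).
Proof.
have cp := cosh_pos (t + u); have cm := cosh_pos (t - u).
rewrite ln_mult; [|apply: Rmult_lt_0_compat; lra|lra].
rewrite ln_mult; [|lra|lra].
replace 4 with (2 * 2) by lra; rewrite ln_mult; lra.
Qed.

Lemma cv_affine_ratio (U : nat -> R) (C a D g : R) :
  0 < g -> 0 < D -> (forall m, INR m <= U m) ->
  Un_cv (fun m => (C + a * U m) / (D + g * U m)) (a / g).
Proof.
move=> g_gt0 D_gt0 U_ge eps eps_gt0.
set K := Rabs (C * g - a * D).
have K_ge0 : 0 <= K by apply: Rabs_pos.
have gge_gt0 : 0 < g * g * eps by apply: Rmult_lt_0_compat; nra.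
have [N N_gt] := INR_unbounded (K / (g * g * eps)).
have K_lt : K < INR N * (g * g * eps).
  have -> : K = K / (g * g * eps) * (g * g * eps) by field; lra.
  exact: Rmult_lt_compat_r.
exists N => m m_ge; rewrite /R_dist.
have UN : INR N <= U m by apply: Rle_trans (U_ge m); apply: le_INR; lia.
have N_ge0 := pos_INR N.
have sum_gt0 : 0 < D + g * U m by nra.
have den_gt0 : 0 < g * (D + g * U m) by nra.
have -> : (C + a * U m) / (D + g * U m) - a / g = (C * g - a * D) / (g * (D + g * U m)).
  by field; lra.
rewrite /Rdiv Rabs_mult (Rabs_pos_eq (/ _)); last by left; apply: Rinv_0_lt_compat.
apply: (Rmult_lt_reg_r (g * (D + g * U m))) => //.
have -> : K * / (g * (D + g * U m)) * (g * (D + g * U m)) = K by field; lra.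
have : 0 <= eps * (g * g) * (U m - INR N) by apply: Rmult_le_pos; nra.
nra.
Qed.

Lemma Un_cv_eventually_ext (u v : nat -> R) N l l' :
  (forall m, (N <= m)%nat -> u m = v m) -> l' = l -> Un_cv v l -> Un_cv u l'.
Proof.
move=> uv -> v_cv eps eps_gt0; have [M HM] := v_cv eps eps_gt0.
by exists (N + M)%nat => m m_ge; rewrite uv; [apply: HM | ]; lia.
Qed.

Set Implicit Arguments. Unset Strict Implicit. Unset Printing Implicit Defensive.
Import GRing.Theory Num.Theory.

Local Open Scope ring_scope.

Definition dlog (u t : R) : R := 2^-1 * ln (4 * cosh (t + u) * cosh (t - u)).

Lemma natr2 : (2%:R : R) = IZR 2.
Proof. rewrite -INRE /=; lra. Qed.

Lemma natr4 : (4%:R : R) = IZR 4.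
Proof. rewrite -INRE /=; lra. Qed.

Lemma avg_exp_spin u t (b : bool) :
  2^-1 * (exp (spin true * (u * spin b + t)) + exp (spin false * (u * spin b + t)))
  = exp (dlog u t - ln 2 + spin b * f_theta (tanh u) t).
Proof.
rewrite /dlog /f_theta /arctanh /spin.
rewrite -?RminusE -?RoppE -?RplusE -?RmultE -?RinvE ?natr2 ?natr4 -?R1E.
rewrite ln_tanh_ratio ln_4cosh_mul.
Local Close Scope ring_scope.
have cp := cosh_pos (t + u); have cm := cosh_pos (t - u).
set A := ln (cosh (t + u)); set C := ln (cosh (t - u)).
case: b.
  have -> : (/ 2 * (2 * ln 2 + A + C) - ln 2 + 1 * (/ 2 * (A - C)) = A) by field.
  rewrite /A exp_ln // /cosh.
  have -> : (1 * (u * 1 + t) = t + u) by ring.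
  have -> : (- (1) * (u * 1 + t) = - (t + u)) by ring.
  exact: Rmult_comm.
have -> : (/ 2 * (2 * ln 2 + A + C) - ln 2 + - (1) * (/ 2 * (A - C)) = C) by field.
rewrite /C exp_ln // /cosh.
have -> : (1 * (u * - (1) + t) = t - u) by ring.
have -> : (- (1) * (u * - (1) + t) = - (t - u)) by ring.
exact: Rmult_comm.
Qed.
Local Open Scope ring_scope.

Lemma avg_exp_spin_cosh t :
  2^-1 * (exp (spin true * t) + exp (spin false * t)) = cosh t.
Proof.
rewrite /spin -?RoppE -?RplusE -?RmultE -?RinvE ?natr2 -?R1E /cosh.
Local Close Scope ring_scope.
have -> : (1 * t = t) by ring.
have -> : (- (1) * t = - t) by ring.
exact: Rmult_comm.
Qed.
Local Open Scope ring_scope.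

From mathcomp Require Import ring.
Ltac ssr_norm := rewrite ?RplusE ?RmultE ?RminusE ?RoppE ?RdivE ?RinvE ?R0E ?R1E.
Ltac ssr_ring := ssr_norm; ring.
Ltac ssr_field := ssr_norm; field.

Lemma dfun_dlog (beta J B h : R) : beta != 0 ->
  dfun beta J B h = dlog (beta * J) (beta * B + h) / beta.
Proof.
move=> beta_neq0; rewrite /dfun /dlog.
have -> : cosh (h + beta * (B + J)) = cosh (beta * B + h + beta * J) by congr cosh; ssr_ring.
have -> : cosh (h + beta * (B - J)) = cosh (beta * B + h - beta * J) by congr cosh; ssr_ring.
by set L := ln _; rewrite ?RmultE; field.
Qed.

Lemma exp_sum (I : Type) (r : seq I) (P : pred I) (F : I -> R) :
  exp (\sum_(i <- r | P i) F i) = \prod_(i <- r | P i) exp (F i).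
Proof.
by apply: (@big_morph R R exp 1 *%R 0 +%R) => [x y|]; [exact: exp_plus | exact: exp_0].
Qed.

Section FlipSpin.
Variable T : finType.

Definition flip_at (w : T) (s : {ffun T -> bool}) : {ffun T -> bool} :=
  [ffun x => if x == w then ~~ s x else s x].

Lemma flip_atK w : involutive (flip_at w).
Proof.
by move=> s; apply/ffunP => x; rewrite !ffunE; case: eqP => // _; rewrite negbK.
Qed.

Lemma flip_at_ne w x s : x != w -> flip_at w s x = s x.
Proof. by rewrite ffunE => /negbTE ->. Qed.

Lemma flip_at_eq w s : flip_at w s w = ~~ s w.
Proof. by rewrite ffunE eqxx. Qed.

Lemma sum_flip_avg w (H K : {ffun T -> bool} -> R) :
  (forall s, H (flip_at w s) = H s) ->
  \sum_s H s * K s = \sum_s H s * (2^-1 * (K s + K (flip_at w s))).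
Proof.
move=> HH.
have E : \sum_s H s * K s = \sum_s H s * K (flip_at w s).
  rewrite (reindex_inj (inv_inj (flip_atK w))) /=.
  by apply: eq_bigr => s _; rewrite HH.
rewrite [RHS](eq_bigr (fun s => 2^-1 * (H s * K s + H s * K (flip_at w s)))); last first.
  by move=> s _; rewrite mulrCA mulrDr.
rewrite -mulr_sumr big_split /= -E.
by rewrite -mulr2n -[X in _ * X]mulr_natl mulKf // pnatr_eq0.
Qed.

Lemma sum_flip_avg_seq (W : seq T) (p : T -> T) (G : T -> bool -> bool -> R)
  (F : {ffun T -> bool} -> R) :
  uniq W -> (forall y, y \in W -> p y \notin W) ->
  (forall y s, y \in W -> F (flip_at y s) = F s) ->
  \sum_s F s * \prod_(y <- W) G y (s y) (s (p y)) =
  \sum_s F s * \prod_(y <- W) (2^-1 * (G y true (s (p y)) + G y false (s (p y)))).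
Proof.
elim: W F => [|w W IH] F UW Hp HF; first by apply: eq_bigr => s _; rewrite !big_nil.
case/andP: UW => wW UW.
set M := fun s : {ffun T -> bool} => 2^-1 * (G w true (s (p w)) + G w false (s (p w))).
have pw : p w \notin w :: W := Hp w (mem_head _ _).
have pwne : p w != w by apply: contra pw => /eqP ->; exact: mem_head.
have HpW y : y \in W -> p y \notin W.
  move=> yW; have := Hp y; rewrite inE yW orbT => /(_ isT).
  by rewrite inE negb_or => /andP[_].
transitivity (\sum_s (F s * M s) * \prod_(y <- W) G y (s y) (s (p y))).
  rewrite (eq_bigr (fun s => (F s * \prod_(y <- W) G y (s y) (s (p y))) * G w (s w) (s (p w)))); last first.
    by move=> s _; rewrite big_cons mulrCA mulrC.
  rewrite (@sum_flip_avg w (fun s => F s * \prod_(y <- W) G y (s y) (s (p y)))); last first.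
    move=> s; rewrite HF ?mem_head //; congr (_ * _).
    apply: eq_big_seq => y yW.
    have ynw : y != w by apply: contra wW => /eqP <-.
    have pynw : p y != w.
      have := Hp y; rewrite inE yW orbT => /(_ isT).
      by rewrite inE negb_or => /andP[].
    by rewrite !flip_at_ne.
  apply: eq_bigr => s _.
  rewrite flip_at_eq flip_at_ne // /M; case: (s w) => /=; last by rewrite [G w false _ + _]addrC mulrAC.
  by rewrite mulrAC.
rewrite IH //; last first.
  move=> y s yW; rewrite HF ?inE ?yW ?orbT //; congr (_ * _); rewrite /M flip_at_ne //.
  by apply: contra pw => /eqP ->; rewrite inE yW orbT.
by apply: eq_bigr => s _; rewrite big_cons -mulrA.
Qed.

End FlipSpin.

Section CayleyTree.
Variables k n : nat.

Lemma mem_ball s : (s \in ball k n) = reduced k s && (size s <= n)%N.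
Proof.
rewrite mem_filter; congr andb.
apply/flattenP/idP => [[t /mapP [m]] | Hs].
  rewrite mem_iota => /andP[_ Hm] -> /mapP [u _ ->].
  by rewrite size_tuple -ltnS.
exists [seq val t | t <- enum {: (size s).-tuple 'I_k.+1}].
  by apply/mapP; exists (size s) => //; rewrite mem_iota.
by apply/mapP; exists (in_tuple s) => //; rewrite mem_enum.
Qed.

Lemma reduced_take s i : reduced k s -> reduced k (take i s).
Proof. case: s => [|a t] //; case: i => [|i] //=; exact: take_path. Qed.

Lemma reduced_rcons s i :
  reduced k (rcons s i) = reduced k s && ((s == [::]) || (last i s != i)).
Proof. by case: s => [|a t] //=; rewrite rcons_path. Qed.

Lemma nil_in_ball : [::] \in ball k n.
Proof. by rewrite mem_ball. Qed.

Definition tree_root : Vn k n := @SeqSub _ (ball k n) [::] nil_in_ball.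

Definition depth (x : Vn k n) : nat := size (val x).

(* The root is its own parent. *)
Definition parent (x : Vn k n) : Vn k n :=
  insubd tree_root (take (depth x).-1 (val x)).

Lemma Vn_valP (x : Vn k n) : reduced k (val x) && (depth x <= n)%N.
Proof. by rewrite -mem_ball; exact: (valP x). Qed.

Lemma depth_le (x : Vn k n) : (depth x <= n)%N.
Proof. by case/andP: (Vn_valP x). Qed.

Lemma val_parent (x : Vn k n) : val (parent x) = take (depth x).-1 (val x).
Proof.
have H : take (depth x).-1 (val x) \in ball k n.
  rewrite mem_ball reduced_take; last by case/andP: (Vn_valP x).
  rewrite size_take; case: ifP => _; last exact: depth_le.
  by apply: leq_trans (depth_le x); rewrite /depth; case: (size _).
by rewrite val_insubd H.
Qed.

Lemma depth_parent (x : Vn k n) : depth (parent x) = (depth x).-1.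
Proof.
rewrite /depth val_parent size_take -/(depth x).
by case: (depth x) => [|d] //=; rewrite ltnSn.
Qed.

Lemma depth_eq0 (x : Vn k n) : (depth x == 0%N) = (x == tree_root).
Proof.
apply/idP/eqP => [|->] //; rewrite /depth size_eq0 => /eqP H.
by apply: val_inj; rewrite H.
Qed.

Lemma cayley_child_parent (x y : Vn k n) :
  cayley_child k (val x) (val y) = (0 < depth y)%N && (x == parent y).
Proof.
rewrite /cayley_child; apply/andP/andP => [[/eqP Hs /eqP Ht]|[Hd /eqP ->]].
  split; first by rewrite /depth Hs.
  by apply/eqP/val_inj; rewrite val_parent /depth Hs /= Ht.
rewrite val_parent size_take /depth; move: Hd; rewrite /depth.
by case: (size (val y)) => [|d] //= _; rewrite ltnSn !eqxx.
Qed.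

Lemma cayley_child_asym a b : cayley_child k a b -> cayley_child k b a = false.
Proof.
rewrite /cayley_child => /andP[/eqP H _]; apply/negbTE; rewrite negb_and H.
by rewrite ltn_eqF // ltnS leqnSn.
Qed.

Lemma sum_depth_leS (P : pred (Vn k n)) j (F : Vn k n -> R) :
  \sum_(y | P y && (depth y <= j.+1)%N) F y
  = \sum_(y | P y && (depth y <= j)%N) F y + \sum_(y | P y && (depth y == j.+1)) F y.
Proof.
rewrite (bigID (fun y => (depth y <= j)%N)) /=.
by congr (_ + _); apply: eq_bigl => y; case: (P y) => //=; lia.
Qed.

Definition child (x : Vn k n) (i : 'I_k.+1) : Vn k n :=
  insubd tree_root (rcons (val x) i).

Definition child_ok (x : Vn k n) (i : 'I_k.+1) : bool :=
  (val x == [::]) || (last i (val x) != i).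

Lemma val_child (x : Vn k n) i :
  (depth x < n)%N -> child_ok x i -> val (child x i) = rcons (val x) i.
Proof.
move=> Hd Hi; rewrite val_insubd mem_ball reduced_rcons size_rcons.
by case/andP: (Vn_valP x) => -> _; move: Hi Hd; rewrite /child_ok /depth => -> ->.
Qed.

Lemma val_rcons_last (x y : Vn k n) :
  depth y = (depth x).+1 -> parent y = x ->
  val y = rcons (val x) (last ord0 (val y)).
Proof.
move=> Hy <-; rewrite val_parent /depth.
case/lastP E: (val y) => [|s a]; first by move: Hy; rewrite /depth E.
by rewrite size_rcons last_rcons /= -cats1 take_size_cat // cats1.
Qed.

Lemma card_children (x : Vn k n) : (depth x < n)%N ->
  #|[pred y : Vn k n | (depth y == (depth x).+1) && (parent y == x)]|
    = if depth x == 0%N then k.+1 else k.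
Proof.
move=> Hd.
have -> : #|[pred y : Vn k n | (depth y == (depth x).+1) && (parent y == x)]|
          = #|[pred i : 'I_k.+1 | child_ok x i]|.
  rewrite -(@card_in_imset _ _ (child x) [pred i | child_ok x i]).
    apply: eq_card => y; rewrite inE; apply/andP/imsetP.
      case=> /eqP Hy /eqP Hp.
      have Hv := val_rcons_last Hy Hp.
      have Hok : child_ok x (last ord0 (val y)).
        have H0 := Vn_valP y; rewrite /depth Hv reduced_rcons in H0.
        by case/andP: H0 => /andP[_ H] _.
      exists (last ord0 (val y)); first by rewrite inE.
      by apply: val_inj; rewrite val_child.
    case=> i; rewrite inE => Hi ->.
    have Hv := val_child Hd Hi.
    split; first by rewrite /depth Hv size_rcons.
    apply/eqP/val_inj; rewrite val_parent /depth Hv size_rcons /=.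
    by rewrite -cats1 take_size_cat.
  move=> i j; rewrite !inE => Hi Hj /(congr1 val).
  by rewrite !val_child // => /(congr1 (last ord0)); rewrite !last_rcons.
rewrite /depth; case E: (val x) => [|a t] /=.
  by rewrite -[RHS](card_ord k.+1); apply: eq_card => i; rewrite inE /child_ok E.
have -> : #|[pred i : 'I_k.+1 | child_ok x i]| = #|predC1 (last a t)|.
  by apply: eq_card => i; rewrite inE /child_ok E /= eq_sym.
by rewrite cardC1 card_ord.
Qed.

Lemma sum_parent_level j (F : Vn k n -> R) : (j < n)%N ->
  \sum_(y | depth y == j.+1) F (parent y)
    = (if j == 0%N then k.+1 else k)%:R * \sum_(x | depth x == j) F x.
Proof.
move=> Hj.
rewrite (partition_big parent (fun x => depth x == j)); last first.
  by move=> y /eqP Hy; rewrite depth_parent Hy.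
rewrite mulr_sumr; apply: eq_bigr => x /eqP Hx.
rewrite (eq_bigr (fun _ => F x)); last by move=> y /andP[_ /eqP ->].
rewrite sumr_const mulr_natl; congr (_ *+ _).
rewrite -Hx -(card_children (x := x)); last by rewrite Hx.
by apply: eq_card => y; rewrite !inE.
Qed.

Lemma sum_cayley_child (phi : Vn k n -> Vn k n -> R) :
  \sum_x \sum_(y | cayley_child k (val x) (val y)) phi x y
  = \sum_(y | (0 < depth y)%N) phi (parent y) y.
Proof.
rewrite (eq_bigr (fun x => \sum_y (if cayley_child k (val x) (val y) then phi x y else 0)));
  last by move=> x _; rewrite big_mkcond.
rewrite exchange_big /= [RHS]big_mkcond; apply: eq_bigr => y _.
rewrite -big_mkcond /= (eq_bigl (fun x => (0 < depth y)%N && (x == parent y)));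
  last by move=> x; rewrite cayley_child_parent.
by case: (0 < depth y)%N; [rewrite (big_pred1 (parent y)) | rewrite big_pred0].
Qed.

Lemma sum_cayley_parent (phi : Vn k n -> Vn k n -> R) :
  \sum_x \sum_(y | cayley_child k (val y) (val x)) phi x y
  = \sum_(x | (0 < depth x)%N) phi x (parent x).
Proof.
rewrite [RHS]big_mkcond; apply: eq_bigr => x _.
rewrite (eq_bigl (fun y => (0 < depth x)%N && (y == parent x)));
  last by move=> y; rewrite cayley_child_parent.
by case: (0 < depth x)%N; [rewrite (big_pred1 (parent x)) | rewrite big_pred0].
Qed.

Lemma half_sum_adj_spins (s : {ffun Vn k n -> bool}) :
  2^-1 * (\sum_(x : Vn k n) \sum_(y : Vn k n | cayley_adj k (val x) (val y))
            spin (s x) * spin (s y))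
  = \sum_(y | (0 < depth y)%N) spin (s y) * spin (s (parent y)).
Proof.
rewrite (eq_bigr (fun x =>
   \sum_(y | cayley_child k (val x) (val y)) spin (s x) * spin (s y) +
   \sum_(y | cayley_child k (val y) (val x)) spin (s x) * spin (s y))); last first.
  move=> x _; rewrite (bigID (fun y => cayley_child k (val x) (val y))) /=.
  congr (_ + _); apply: eq_bigl => y; rewrite /cayley_adj.
    by case: (cayley_child k (ssval x) (ssval y)); rewrite ?andbF.
  case E: (cayley_child k (ssval x) (ssval y)) => /=; last by rewrite andbT.
  by rewrite cayley_child_asym.
rewrite big_split /= sum_cayley_child sum_cayley_parent.
rewrite (eq_bigr (fun y => spin (s y) * spin (s (parent y)))); last by move=> y _; rewrite mulrC.
by rewrite -mulr2n -[X in _ * X]mulr_natl mulKf // pnatr_eq0.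
Qed.

Definition level_size j := #|[pred y : Vn k n | depth y == j]|.

Lemma level_size0 : level_size 0 = 1%N.
Proof.
rewrite /level_size -(card1 tree_root); apply: eq_card => y; by rewrite !inE depth_eq0.
Qed.

Lemma level_sizeE j : (j < n)%N -> (level_size j.+1)%:R = (k.+1)%:R * k%:R ^+ j :> R.
Proof.
have level_sizeS i : (i < n)%N ->
    (level_size i.+1)%:R = (if i == 0%N then k.+1 else k)%:R * (level_size i)%:R :> R.
  by move=> Hi; move: (sum_parent_level (fun _ => 1) Hi); rewrite !sumr_const.
elim: j => [|j IH] Hj; first by rewrite level_sizeS // level_size0 expr0 mulr1.
by rewrite level_sizeS // IH 1?exprS /=; [ssr_ring | lia].
Qed.

End CayleyTree.

Arguments tree_root {k n}.

Fixpoint level_sum (k : nat) (a b : R) (j : nat) : R :=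
  if j is j'.+1 then
    level_sum k a b j' + (k.+1)%:R * k%:R ^+ j' * (if odd j then b else a)
  else 0.

Lemma card_Vn k n : (#|Vn k n|)%:R = 1 + level_sum k 1 1 n :> R.
Proof.
suff E j : (j <= n)%N ->
    \sum_(y : Vn k n | (depth y <= j)%N) (1 : R) = 1 + level_sum k 1 1 j.
  rewrite -(E n (leqnn n)) (eq_bigl xpredT) ?sumr_const // => y.
  by rewrite depth_le.
elim: j => [|j IH] Hj.
  by rewrite (big_pred1 tree_root) => [|y]; rewrite /= ?addr0 // leqn0 depth_eq0.
rewrite -[\sum_(y | (depth y <= _)%N) _]/(\sum_(y | true && _) _) sum_depth_leS IH; last by lia.
rewrite sumr_const -[#|_|]/(level_size k n j.+1) level_sizeE //= if_same.
by ssr_ring.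
Qed.

Lemma level_sumB k a b c j :
  level_sum k (a - c) (b - c) j = level_sum k a b j - c * level_sum k 1 1 j.
Proof.
elim: j => [|j IH] /=; first by ssr_ring.
by rewrite IH; case: (odd j) => /=; ssr_ring.
Qed.

Fixpoint even_pow_sum (k m : nat) : R :=
  if m is m'.+1 then even_pow_sum k m' + k%:R ^+ m'.*2 else 0.

Lemma even_pow_sum_ge k m : (1 <= k)%N -> Rle (INR m) (even_pow_sum k m).
Proof.
move=> Hk; elim: m => [|m IH]; first by right.
have : Rle 1 (k%:R ^+ m.*2) by apply/RleP; apply: exprn_ege1; rewrite ler1n.
rewrite S_INR /=; lra.
Qed.

Lemma level_sum_even k a b m :
  level_sum k a b m.*2 = (k.+1)%:R * (k%:R * a + b) * even_pow_sum k m.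
Proof.
elim: m => [|m IH] /=; first by ssr_ring.
by rewrite IH odd_double /= exprS; ssr_ring.
Qed.

Lemma level_sum_odd k a b m :
  level_sum k a b m.*2.+1
  = (k.+1)%:R * b + (k.+1)%:R * k%:R * (a + k%:R * b) * even_pow_sum k m.
Proof.
elim: m => [|m IH]; first by rewrite /= expr0; ssr_ring.
rewrite doubleS /= -/(level_sum k a b m.*2.+1) IH odd_double /= !exprS; ssr_ring.
Qed.

Lemma cv_level_sum_ratio_even k a b c : (1 <= k)%N ->
  Un_cv (fun m => (c + level_sum k a b m.*2) / (1 + level_sum k 1 1 m.*2))
        ((k%:R * a + b) / (k%:R + 1)).
Proof.
move=> k_ge1; have k1_gt0 : (0 < k%:R + 1 :> R) by rewrite natr1 ltr0n.
apply: (Un_cv_eventually_ext _ _ 0%N _ _ _ _ (cv_affine_ratio (even_pow_sum k) c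
   ((k.+1)%:R * (k%:R * a + b)) 1 ((k.+1)%:R * (k%:R + 1)) _ Rlt_0_1
   (fun m => even_pow_sum_ge m k_ge1))).
- by move=> m _; rewrite !level_sum_even mulr1.
- by ssr_field; exact: lt0r_neq0.
- by apply/RltP; rewrite mulr_gt0 ?ltr0n.
Qed.

Lemma cv_level_sum_ratio_odd k a b c : (1 <= k)%N ->
  Un_cv (fun m => (c + level_sum k a b m.*2.+1) / (1 + level_sum k 1 1 m.*2.+1))
        ((a + k%:R * b) / (k%:R + 1)).
Proof.
move=> k_ge1; have k1_gt0 : (0 < k%:R + 1 :> R) by rewrite natr1 ltr0n.
have k_gt0 : (0 < k%:R :> R) by rewrite ltr0n.
apply: (Un_cv_eventually_ext _ _ 0%N _ _ _ _ (cv_affine_ratio (even_pow_sum k)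
   (c + (k.+1)%:R * b) ((k.+1)%:R * k%:R * (a + k%:R * b))
   (1 + (k.+1)%:R) ((k.+1)%:R * k%:R * (k%:R + 1)) _ _
   (fun m => even_pow_sum_ge m k_ge1))).
- by move=> m _; rewrite !level_sum_odd; congr Rdiv; ssr_ring.
- by ssr_field; rewrite !lt0r_neq0.
- by apply/RltP; rewrite !mulr_gt0 ?ltr0n.
- by apply/RltP; rewrite ltr_pwDl // ltr0n.
Qed.

Section PartitionFunction.
Variables (k n : nat) (bJ bB : R).

(* The Hamiltonian of the configuration [s] restricted to V_j, with the
   boundary field [g] on W_j; the spins of V_n outside V_j are free. *)
Definition energy (g : R) (j : nat) (s : {ffun Vn k n -> bool}) : R :=
  bJ * (\sum_(y | (0 < depth y)%N && (depth y <= j)%N) spin (s y) * spin (s (parent y)))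
  + bB * (\sum_(y | (depth y <= j)%N) spin (s y))
  + g * (\sum_(y | depth y == j) spin (s y)).

Definition part_fun (g : R) (j : nat) : R :=
  \sum_(s : {ffun Vn k n -> bool}) exp (energy g j s).

Lemma energyS g j s :
  energy g j.+1 s = energy 0 j s +
    \sum_(y | depth y == j.+1) spin (s y) * (bJ * spin (s (parent y)) + bB + g).
Proof.
rewrite /energy -[\sum_(y | (depth y <= _)%N) _]/(\sum_(y | true && _) _) !sum_depth_leS /=.
rewrite (@eq_bigl _ _ _ _ _ (fun y => (0 < depth y)%N && (depth y == j.+1))
  (fun y => depth y == j.+1)); last by move=> y; case: (depth y).
rewrite [X in _ = _ + X](eq_bigr (fun y => bJ * (spin (s y) * spin (s (parent y)))
    + bB * spin (s y) + g * spin (s y))); last by move=> y _; ssr_ring.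
rewrite !big_split /= -!mulr_sumr; ssr_ring.
Qed.

Lemma energy_flip_at g j y s : (j < depth y)%N -> energy g j (flip_at y s) = energy g j s.
Proof.
move=> Hy; have ne z : (depth z <= j)%N -> z != y.
  by move=> Hz; apply/eqP => E; move: Hz; rewrite E leqNgt Hy.
rewrite /energy; congr (_ * _ + _ * _ + _ * _); apply: eq_bigr => z.
- case/andP=> _ Hz; rewrite !flip_at_ne ?ne // depth_parent.
  exact: leq_trans (leq_pred _) Hz.
- by move=> Hz; rewrite flip_at_ne ?ne.
- by move=> /eqP Hz; rewrite flip_at_ne ?ne ?Hz.
Qed.

Lemma part_funS g j : (j < n)%N ->
  part_fun g j.+1 = exp ((level_size k n j.+1)%:R * (dlog bJ (bB + g) - ln 2)) *
     part_fun ((if j == 0%N then k.+1 else k)%:R * f_theta (tanh bJ) (bB + g)) j.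
Proof.
move=> Hj; rewrite /part_fun.
set W := [seq y <- index_enum (Vn k n) | depth y == j.+1].
pose G (y : Vn k n) b c := exp (spin b * (bJ * spin c + (bB + g))).
rewrite (eq_bigr (fun s => exp (energy 0 j s) * \prod_(y <- W) G y (s y) (s (parent y))));
  last first.
  move=> s _; rewrite energyS exp_plus exp_sum /W big_filter; congr (_ * _).
  by apply: eq_bigr => y _; rewrite /G; congr (exp (_ * _)); ssr_ring.
rewrite sum_flip_avg_seq; first last.
- by move=> y s; rewrite mem_filter => /andP[/eqP Hy _]; rewrite energy_flip_at ?Hy.
- move=> y; rewrite !mem_filter => /andP[/eqP Hy _]; rewrite depth_parent Hy /=.
  by rewrite (ltn_eqF (ltnSn j)).
- exact: filter_uniq (index_enum_uniq _).
rewrite mulr_sumr; apply: eq_bigr => s _.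
rewrite (_ : \prod_(y <- W) _ = exp (\sum_(y | depth y == j.+1)
     (dlog bJ (bB + g) - ln 2 + spin (s (parent y)) * f_theta (tanh bJ) (bB + g)))).
  rewrite !expRD; congr exp.
  rewrite big_split /= sumr_const -mulr_suml (sum_parent_level (fun x => spin (s x)) Hj).
  by rewrite /energy /level_size -mulr_natl; ssr_ring.
by rewrite exp_sum /W big_filter; apply: eq_bigr => y _; rewrite /G avg_exp_spin.
Qed.

Lemma part_fun0 g : part_fun g 0 = 2%:R ^+ #|Vn k n| * cosh (bB + g).
Proof.
rewrite /part_fun (eq_bigr (fun s : {ffun Vn k n -> bool} => 1 * exp (spin (s tree_root) * (bB + g)))); last first.
  move=> s _; rewrite /energy big_pred0 => [|y]; last by case: (depth y).
  rewrite (big_pred1 tree_root) => [|y]; last by rewrite /= leqn0 depth_eq0.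
  rewrite (big_pred1 tree_root) => [|y]; last by rewrite /= depth_eq0.
  by rewrite mul1r; congr exp; ssr_ring.
rewrite (sum_flip_avg (w := tree_root)) // (eq_bigr (fun _ => cosh (bB + g))); last first.
  move=> s _; rewrite mul1r flip_at_eq; case: (s tree_root) => /=.
    exact: avg_exp_spin_cosh.
  by rewrite addrC avg_exp_spin_cosh.
by rewrite sumr_const card_ffun card_bool -natrX mulr_natl.
Qed.

End PartitionFunction.

Section PeriodicBoundary.
Variables (k : nat) (beta J B h h' : R).
Hypothesis fix_h : h = k%:R * f_theta (tanh (beta * J)) (h' + beta * B).
Hypothesis fix_h' : h' = k%:R * f_theta (tanh (beta * J)) (h + beta * B).

Lemma Zn_periodicE n :
  Zn k beta J B (periodic_bc k h h') n
  = part_fun k n (beta * J) (beta * B) (if odd n then h' else h) n.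
Proof.
rewrite /Zn /part_fun; apply: eq_bigr => s _; congr exp.
rewrite /energy !RmultE !RplusE half_sum_adj_spins; congr (_ * _ + _ * _ + _).
- by apply: eq_bigl => y; rewrite depth_le andbT.
- by apply: eq_bigl => y; rewrite depth_le.
rewrite mulr_sumr; apply: eq_bigr => y /eqP Hy.
by rewrite /periodic_bc Hy.
Qed.

Lemma part_fun_periodic n j : (0 < j <= n)%N ->
  part_fun k n (beta * J) (beta * B) (if odd j then h' else h) j =
  exp (level_sum k (dlog (beta * J) (beta * B + h) - ln 2)
                   (dlog (beta * J) (beta * B + h') - ln 2) j) *
  part_fun k n (beta * J) (beta * B)
    ((k.+1)%:R * f_theta (tanh (beta * J)) (beta * B + h')) 0.
Proof.
elim: j => [|j IH] // /andP[_ Hj].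
rewrite part_funS // level_sizeE //; case: j IH Hj => [|j] IH Hj.
  by congr (exp _ * _); rewrite /= expr0; ssr_ring.
have -> : part_fun k n (beta * J) (beta * B) ((if (j.+1 == 0)%N then k.+1 else k)%:R
          * f_theta (tanh (beta * J)) (beta * B + (if odd j.+2 then h' else h))) j.+1
          = part_fun k n (beta * J) (beta * B) (if odd j.+1 then h' else h) j.+1.
  congr part_fun; rewrite /=.
  by case: (odd j) => /=; [rewrite [in RHS]fix_h | rewrite [in RHS]fix_h']; rewrite Rplus_comm.
rewrite IH; last by lia.
rewrite mulrA expRD; congr (exp _ * _).
by rewrite /=; case: (odd j) => /=; ssr_ring.
Qed.

Lemma ln_Zn_periodic n : (0 < n)%N ->
  ln (Zn k beta J B (periodic_bc k h h') n) =
  ln 2 + ln (cosh (beta * B + (k.+1)%:R * f_theta (tanh (beta * J)) (beta * B + h')))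
  + level_sum k (dlog (beta * J) (beta * B + h)) (dlog (beta * J) (beta * B + h')) n.
Proof.
move=> n_gt0.
rewrite Zn_periodicE part_fun_periodic ?n_gt0 ?leqnn // part_fun0 natr2 -RpowE.
set c := cosh _.
have c_gt0 : Rlt 0 c := cosh_pos _.
have p2 : Rlt 0 (pow 2 #|Vn k n|) by apply: pow_lt; apply: Rlt_0_2.
rewrite ln_mult; [|exact: exp_pos|exact: Rmult_lt_0_compat].
rewrite ln_mult // ln_exp ln_pow; last exact: Rlt_0_2.
by rewrite INRE card_Vn level_sumB; ssr_ring.
Qed.

Lemma cv_free_energy (nm : nat -> nat) (l : R) : beta != 0 ->
  (forall m, (1 <= m)%N -> (0 < nm m)%N) ->
  Un_cv (fun m =>
    (ln 2 + ln (cosh (beta * B + (k.+1)%:R * f_theta (tanh (beta * J)) (beta * B + h')))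
     + level_sum k (dlog (beta * J) (beta * B + h)) (dlog (beta * J) (beta * B + h')) (nm m))
    / (1 + level_sum k 1 1 (nm m))) l ->
  Un_cv (fun m => free_energy k beta J B (periodic_bc k h h') (nm m)) (- / beta * l).
Proof.
move=> beta_neq0 nm_gt0 cv_ratio.
have cv_const : Un_cv (fun _ => - / beta) (- / beta).
  by move=> eps eps_gt0; exists 0%N => m _; rewrite R_dist_eq.
apply: (Un_cv_eventually_ext _ _ 1%N _ _ _ _ (CV_mult _ _ _ _ cv_const cv_ratio)) => //.
move=> m m_ge1; rewrite /free_energy ln_Zn_periodic ?nm_gt0 // card_Vn.
by rewrite invfM; ssr_ring.
Qed.

End PeriodicBoundary.

Theorem proposition3 (k : nat) (beta J B h h' : R) :
  (2 <= k)%N -> 0 < beta ->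
  h = k%:R * f_theta (tanh (beta * J)) (h' + beta * B) ->
  h' = k%:R * f_theta (tanh (beta * J)) (h + beta * B) ->
  Un_cv (fun m => free_energy k beta J B (periodic_bc k h h') (2 * m)%N)
        (- (k%:R + 1)^-1 * (k%:R * dfun beta J B h + dfun beta J B h')) /\
  Un_cv (fun m => free_energy k beta J B (periodic_bc k h h') (2 * m)%N.+1)
        (- (k%:R + 1)^-1 * (dfun beta J B h + k%:R * dfun beta J B h')).
Proof.
move=> k_ge2 beta_gt0 fix_h fix_h'.
have k_ge1 : (1 <= k)%N by lia.
have beta_neq0 : beta != 0 := lt0r_neq0 beta_gt0.
have k1_neq0 : k%:R + 1 != 0 :> R by rewrite natr1 pnatr_eq0.
split.
- apply: (Un_cv_eventually_ext _ _ 0%N _ _ _ _ (cv_free_energy fix_h fix_h' (nm := double)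
    beta_neq0 _ (@cv_level_sum_ratio_even k _ _ _ k_ge1))) => [m _ | | m m_gt0].
  + by rewrite mul2n.
  + by rewrite !dfun_dlog //; ssr_field; rewrite k1_neq0 beta_neq0.
  + by rewrite double_gt0.
- apply: (Un_cv_eventually_ext _ _ 0%N _ _ _ _ (cv_free_energy fix_h fix_h'
    (nm := fun m => m.*2.+1) beta_neq0 _ (@cv_level_sum_ratio_odd k _ _ _ k_ge1)))
    => [m _ | | //].
  + by rewrite mul2n.
  + by rewrite !dfun_dlog //; ssr_field; rewrite k1_neq0 beta_neq0.
Qed.
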